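(* The canonical collection $\mathcal{S}$ consists of actively connected vertex sets and satisfies: (i) for every $S\in\mathcal{S}$, the tree $T_S$ connects the vertices in $S$; (ii) $\mathcal{S}$ is agreeable with respect to $y$.
   Context: Steiner Forest: finite undirected graph $G=(V,E)$ with non-negative edge costs $(c_e)_{e\in E}$ and a set $\mathcal{D}$ of demand pairs $\{a,b\}\subseteq V$ (partners); feasible solutions are $F\subseteq E$ with each demand pair in one connected component of $(V,F)$, of cost $c(F)=\sum_{e\in F}c_e$. $\mathrm{OPT}$ is a fixed optimal solution that is inclusionwise minimal (no cost-$0$ edge can be omitted keeping feasibility). For $U\subseteq V$, $\delta(U)$ is the set of edges with exactly one endpoint in $U$; $U$ separates $S$ if $S\cap U\ne\emptyset$ and $S\setminus U\ne\emptyset$. The $\varepsilon$-extended moat-growing algorithm (fixed $\varepsilon\ge0$): time $t$ increases continuously from $0$ at unit rate; it maintains tight edges $F$ (initially empty), duals $y_S(t)\ge0$ (initially $0$), and budgets of components (initially $0$). $\mathcal{C}^t$ is the family of vertex sets of connected components of $(V,F)$. A component is demand-active if it contains a vertex not connected in $(V,F)$ to some partner; budget-active if not demand-active but with positive budget; active if either; $\mathcal{A}^t$ is the set of active components. Each $y_S$, $S\in\mathcal{A}^t$, grows at unit rate; budgets of demand-active components grow at rate $\varepsilon$ and of budget-active ones decrease at rate $1$; an edge $e$ with $\sum_{S:e\in\delta(S)}y_S(t)=c_e$ becomes tight and is added to $F$; merging components add budgets. $y_S=y_S(\infty)$; $\mathcal{U}_{\mathrm{sep}}$ is the set of $U\in\mathrm{supp}(y)$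 separating some demand pair. The deactivation time $\tau_v$ of $v$ is the largest $t$ such that for all $s<t$, $v$ lies in a set of $\mathcal{A}^s$. Vertices $u,v$ are actively connected if for some $t$ they lie in a common set of $\mathcal{C}^t$ and $\tau_u,\tau_v\ge t$; this is an equivalence relation and a set is actively connected if contained in one equivalence class. A demand pair $\{a,b\}$ is satisfied by a vertex set $S$ if $\{a,b\}\subseteq S$, and by a collection if by some member. A collection $\mathcal{S}$ of vertex sets is agreeable (w.r.t. $y$) if (A1) every $S\in\mathcal{S}$ is a subset of the vertex set of some connected component of $\mathrm{OPT}$, with at most one $S\in\mathcal{S}$ per connected component of $\mathrm{OPT}$, and (A2) whenever two demand pairs are both separated by some $U\in\mathrm{supp}(y)$, either both or none of them are satisfied by $\mathcal{S}$. Canonical collection: start with a family $\mathcal{F}$ in which each tree (connected component) of $\mathrm{OPT}$ is its own forest; for each $U\in\mathcal{U}_{\mathrm{sep}}$, merge (take the union of vertex and edge sets of) all forests of $\mathcal{F}$ that connect some demand pair separated by $U$ into a single forest. For each $F\in\mathcal{F}$ let $r_F$ be a vertex of $F$ with maximum deactivation time; for each connected component $T$ of $F$, let $S$ be the set of vertices of $T$ actively connected to $r_F$; if $S\ne\emptyset$, add $S$ to $\mathcal{S}$ and let $T_S$ be the minimal subtree of $T$ connecting $S$. *)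

From HB Require Import structures.
From mathcomp Require Import all_boot all_order all_algebra.
From mathcomp Require Import reals.
Set Implicit Arguments. Unset Strict Implicit. Unset Printing Implicit Defensive.
Import Order.TTheory GRing.Theory Num.Theory.
Local Open Scope ring_scope.

(* A run of the eps-extended moat-growing algorithm, discretised into phases
   k = 0..n.  Phase k starts at time [ts k]; [Fs k] is the set of tight edges,
   [bs k S] the budget of component S and [ys k S] the dual y_S, all at the
   start of phase k (i.e. after all events happening at time [ts k] that are
   processed before phase k).  Phases of length 0 are allowed (several events
   at the same time, e.g. several edges becoming tight simultaneously are
   added one at a time). *)
Record run (V E : finType) (R : realType) := Run {
  nph : nat;
  ts  : nat -> R;
  Fs  : nat -> {set E};
  bs  : nat -> {set V} -> R;
  ys  : nat -> {set V} -> R }.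

Section SteinerForest.
Variables (R : realType) (V E : finType) (src tgt : E -> V).
Variables (c : E -> R) (D : {set {set V}}) (eps : R).

Definition adj (F : {set E}) : rel V := fun u v =>
  [exists e in F, ((src e == u) && (tgt e == v)) || ((src e == v) && (tgt e == u))].
Definition comp (F : {set E}) (v : V) : {set V} := [set u | connect (adj F) v u].
Definition comps (F : {set E}) : {set {set V}} := [set comp F v | v : V].

Definition separates (U S : {set V}) : bool := (S :&: U != set0) && (S :\: U != set0).
Definition in_cut (U : {set V}) (e : E) : bool := (src e \in U) != (tgt e \in U).
Definition load (y : {set V} -> R) (e : E) : R := \sum_(U : {set V} | in_cut U e) y U.
Definition tight (y : {set V} -> R) (e : E) : bool := load y e == c e.

Definition feasible (F : {set E}) : Prop :=
  forall d, d \in D -> exists2 T, T \in comps F & d \subset T.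
Definition cost (F : {set E}) : R := \sum_(e in F) c e.
(* OPT: an optimal solution that is inclusionwise minimal *)
Definition minimal_optimal (OPT : {set E}) : Prop :=
  [/\ feasible OPT,
      (forall F, feasible F -> cost OPT <= cost F) &
      (forall e, e \in OPT -> c e = 0 -> ~ feasible (OPT :\ e))].

Definition demand_active (F : {set E}) (S : {set V}) : bool :=
  (S \in comps F) &&
  [exists v in S, exists u, ([set u; v] \in D) && ~~ connect (adj F) v u].
Definition budget_active (F : {set E}) (b : {set V} -> R) (S : {set V}) : bool :=
  (S \in comps F) && ~~ demand_active F S && (0 < b S).
Definition active (F : {set E}) (b : {set V} -> R) (S : {set V}) : bool :=
  demand_active F S || budget_active F b S.

Definition bud_end (F : {set E}) (b : {set V} -> R) (dt : R) (S : {set V}) : R :=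
  b S + (if demand_active F S then eps * dt
         else if budget_active F b S then - dt else 0).

Definition is_run (r : run V E R) : Prop :=
  let n := nph r in let t := ts r in let F := Fs r in
  let b := bs r in let y := ys r in
  [/\
      t 0%N = 0 /\ F 0%N = set0 /\ (forall S, b 0%N S = 0) /\ (forall S, y 0%N S = 0),
      (forall k, (k < n)%N ->
         let dt := t k.+1 - t k in
         0 <= dt /\
             (forall S, y k.+1 S = y k S + (if active (F k) (b k) S then dt else 0)) /\
             (forall e, load (y k.+1) e <= c e) /\
             (0 < dt -> forall e, tight (y k) e -> e \in F k) /\
             (F k.+1 = F k \/ exists2 e, e \notin F k & tight (y k.+1) e /\ F k.+1 = e |: F k) /\
             (forall S, S \in comps (F k) -> 0 <= bud_end (F k) (b k) dt S) /\
             (forall S, b k.+1 S =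
                \sum_(S' in comps (F k) | S' \subset S) bud_end (F k) (b k) dt S')),
      (forall S, ~~ active (F n) (b n) S) &
      (forall e, tight (y n) e -> e \in F n)].

(* phase k is the state of the algorithm at time s (the last phase starting
   at or before s) *)
Definition phase_at (r : run V E R) (s : R) (k : nat) : Prop :=
  [/\ (k <= nph r)%N, ts r k <= s & (k = nph r \/ s < ts r k.+1)].

Definition active_at (r : run V E R) (s : R) (v : V) : Prop :=
  exists k, phase_at r s k /\
    exists2 S, active (Fs r k) (bs r k) S & v \in S.

Definition deact_time (r : run V E R) (v : V) : R :=
  reals.sup (fun t : R => forall s, 0 <= s -> s < t -> active_at r s v).

Definition act_conn (r : run V E R) (u v : V) : Prop :=
  exists t : R, [/\ 0 <= t,
    (exists k, phase_at r t k /\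
       exists2 S, S \in comps (Fs r k) & (u \in S) && (v \in S)),
    t <= deact_time r u & t <= deact_time r v].

Definition act_conn_set (r : run V E R) (S : {set V}) : Prop :=
  exists x, forall u, u \in S -> act_conn r x u.

Definition yfin (r : run V E R) : {set V} -> R := ys r (nph r).

Definition Usep (y : {set V} -> R) : {set {set V}} :=
  [set U | (0 < y U) && [exists d in D, separates U d]].

(* canonical collection: forests are represented by their vertex sets (unions
   of trees of OPT); the trees of a forest W are the components of OPT
   contained in W *)
Definition connects_pair_sep (OPT : {set E}) (U W : {set V}) : bool :=
  [exists d in D, separates U d &&
     [exists T in comps OPT, (T \subset W) && (d \subset T)]].

Definition merge_step (OPT : {set E}) (P : {set {set V}}) (U : {set V}) : {set {set V}} :=
  if [exists W in P, connects_pair_sep OPT U W] then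
    [set W in P | ~~ connects_pair_sep OPT U W] :|:
    [set \bigcup_(W in P | connects_pair_sep OPT U W) W]
  else P.

Definition forest_family (OPT : {set E}) (y : {set V} -> R) : {set {set V}} :=
  foldl (merge_step OPT) (comps OPT) (enum (Usep y)).

Definition root_choice (r : run V E R) (OPT : {set E}) (rt : {set V} -> V) : Prop :=
  forall W, W \in forest_family OPT (yfin r) ->
    rt W \in W /\ forall u, u \in W -> deact_time r u <= deact_time r (rt W).

Definition in_canonical (r : run V E R) (OPT : {set E}) (rt : {set V} -> V)
    (S : {set V}) : Prop :=
  exists2 W, W \in forest_family OPT (yfin r) &
  exists2 T, (T \in comps OPT) && (T \subset W) &
    (forall v, v \in S <-> (v \in T /\ act_conn r (rt W) v)) /\ S != set0.

Definition connects (X : {set E}) (S : {set V}) : Prop :=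
  forall u v, u \in S -> v \in S -> connect (adj X) u v.
Definition endpoints (X : {set E}) : {set V} := [set src e | e in X] :|: [set tgt e | e in X].
Definition is_subtree (OPT : {set E}) (T : {set V}) (X : {set E}) : Prop :=
  [/\ (forall e, e \in X -> (e \in OPT) && (src e \in T) && (tgt e \in T)),
      connects X (endpoints X) &
      (forall e, e \in X -> ~~ connect (adj (X :\ e)) (src e) (tgt e))].
Definition min_subtree_connecting (OPT : {set E}) (T S : {set V}) (X : {set E}) : Prop :=
  [/\ is_subtree OPT T X, connects X S &
      (forall X' : {set E}, X' \proper X -> ~ (is_subtree OPT T X' /\ connects X' S))].

Definition satisfied (Sc : {set V} -> Prop) (d : {set V}) : Prop :=
  exists2 S, Sc S & d \subset S.
Definition agreeable (OPT : {set E}) (y : {set V} -> R) (Sc : {set V} -> Prop) : Prop :=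
  (forall S, Sc S -> exists2 T, T \in comps OPT & S \subset T) /\
  (forall S S' T, Sc S -> Sc S' -> T \in comps OPT -> S \subset T -> S' \subset T -> S = S') /\
  (forall U d d', 0 < y U -> d \in D -> d' \in D -> separates U d -> separates U d' ->
     (satisfied Sc d <-> satisfied Sc d')).

End SteinerForest.

From Pilot Require Import Defs.
From HB Require Import structures.
From mathcomp Require Import all_boot all_order all_algebra.
From mathcomp Require Import reals boolp.
From mathcomp Require classical_sets.
Import Order.TTheory GRing.Theory Num.Theory.
Local Open Scope ring_scope.
Set Implicit Arguments. Unset Strict Implicit. Unset Printing Implicit Defensive.

(* Deactivation times only grow along connectivity: if u and v are connected at a
   time s <= tau_u, every later active component containing v also contains u, so
   tau_v <= tau_u; this makes active connectivity transitive.  The partners of a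
   demand pair stay active until they are connected, so they are actively
   connected.  If y_U > 0 and a, a' in U have partners outside U, then at a time
   when U is an active component neither has met its partner, so a and a' are
   actively connected.
   The forest family is a partition whose blocks absorb every tree of OPT holding
   a pair separated by some U in U_sep.  Hence if S, in a tree of the forest F,
   satisfies a pair separated by U, any other pair separated by U lies in a tree
   T' of F and is actively connected to r_F through the first pair, so the
   vertices of T' actively connected to r_F form a member satisfying it. *)

Lemma trivIset_eqP (T : finType) (P : {set {set T}}) :
  reflect (forall A B x, A \in P -> B \in P -> x \in A -> x \in B -> A = B)
          (trivIset P).
Proof.
apply: (iffP trivIsetP) => [tP A B x PA PB xA xB | eqP' A B PA PB neqAB].
  by apply/eqP; apply: contraTT xB => /(tP _ _ PA PB)/disjointFr->.
rewrite -setI_eq0; apply: contraNT neqAB => /set0Pn[x /setIP[xA xB]].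
exact/eqP/(eqP' A B x).
Qed.

Lemma trivIset_eq (T : finType) (P : {set {set T}}) A B x :
  trivIset P -> A \in P -> B \in P -> x \in A -> x \in B -> A = B.
Proof. by move/trivIset_eqP; apply. Qed.

Lemma separates_elems (V : finType) (U d : {set V}) : separates U d ->
  exists a z, [/\ a \in d, a \in U, z \in d & z \notin U].
Proof.
by case/andP => /set0Pn[a /setIP[ad aU]] /set0Pn[z /setDP[zd zU]]; exists a, z.
Qed.

Section Graph.
Variables (V E : finType) (src tgt : E -> V).
Implicit Types (F X : {set E}) (S T : {set V}) (u v w : V).

Local Notation adj := (adj src tgt).
Local Notation comp := (Defs.comp src tgt).
Local Notation comps := (comps src tgt).

Lemma adj_sym F : symmetric (adj F).
Proof.
by move=> u v; apply/existsP/existsP => -[e /andP[eF h]]; exists e; rewrite eF orbC.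
Qed.

Lemma connect_adj_sym F : connect_sym (adj F).
Proof. exact/sym_connect_sym/adj_sym. Qed.

Lemma connect_adj_subset F F' u v :
  F \subset F' -> connect (adj F) u v -> connect (adj F') u v.
Proof.
move=> sFF'; apply: connect_sub => {}u {}v /existsP[e /andP[eF h]].
by apply/connect1/existsP; exists e; rewrite (subsetP sFF' _ eF).
Qed.

Lemma mem_comp F v u : (u \in comp F v) = connect (adj F) v u.
Proof. by rewrite inE. Qed.

Lemma comp_refl F v : v \in comp F v.
Proof. by rewrite mem_comp connect0. Qed.

Lemma comp_in_comps F v : comp F v \in comps F.
Proof. exact: imset_f. Qed.

Lemma comps_comp F S u : S \in comps F -> u \in S -> S = comp F u.
Proof.
case/imsetP=> v _ -> vu; apply/setP => w; rewrite !mem_comp.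
rewrite mem_comp in vu; apply/idP/idP => [vw | uw]; last exact: connect_trans vu uw.
by apply: connect_trans vw; rewrite connect_adj_sym.
Qed.

Lemma comps_connect F S u v : S \in comps F -> u \in S -> v \in S ->
  connect (adj F) u v.
Proof. by move=> FS uS; rewrite (comps_comp FS uS) mem_comp. Qed.

Lemma mem_comps_connect F S u v : S \in comps F -> u \in S ->
  connect (adj F) u v -> v \in S.
Proof. by move=> FS uS; rewrite (comps_comp FS uS) mem_comp. Qed.

Lemma comps_trivIset F : trivIset (comps F).
Proof.
by apply/trivIset_eqP => S S' u FS FS' uS uS'; rewrite (comps_comp FS uS) (comps_comp FS' uS').
Qed.

Lemma connect_adj_setD1 X e u v :
  connect (adj (X :\ e)) (src e) (tgt e) ->
  connect (adj X) u v -> connect (adj (X :\ e)) u v.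
Proof.
move=> ce; apply: connect_sub => x y /existsP[f /andP[fX h]].
have [fe | nfe] := eqVneq f e; first subst f.
  by case/orP: h => /andP[/eqP<- /eqP<-] //; rewrite connect_adj_sym.
by apply/connect1/existsP; exists f; rewrite !inE nfe fX.
Qed.

Definition edges_within (OPT : {set E}) T : {set E} :=
  [set e in OPT | (src e \in T) && (tgt e \in T)].

Lemma connects_edges_within OPT T : T \in comps OPT ->
  connects src tgt (edges_within OPT T) T.
Proof.
move=> OT u v uT vT.
pose reach := [pred x | (x \in T) && connect (adj (edges_within OPT T)) u x].
have closed_reach : closed (adj OPT) reach.
  apply: intro_closed; first exact: connect_adj_sym.
  move=> x z /[dup] xz /existsP[e /andP[eO h]] /andP[xT ux].
  have zT : z \in T by apply: mem_comps_connect OT xT (connect1 xz).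
  rewrite inE zT; apply: connect_trans ux (connect1 _); apply/existsP; exists e.
  by rewrite inE eO h; case/orP: h => /andP[/eqP-> /eqP->]; rewrite xT zT.
have : u \in reach by rewrite inE uT connect0.
by rewrite (closed_connect closed_reach (comps_connect OT uT vT)) => /andP[].
Qed.

Definition connectsb X S := [forall u in S, forall v in S, connect (adj X) u v].

Lemma connectsP X S : reflect (connects src tgt X S) (connectsb X S).
Proof.
apply: (iffP forall_inP) => [h u v uS vS | h u uS].
  exact: (forall_inP (h u uS)).
by apply/forall_inP => v; apply: h.
Qed.

Lemma min_subtree_connecting_exists OPT T S : T \in comps OPT -> S \subset T ->
  exists X, min_subtree_connecting src tgt OPT T S X.
Proof.
move=> OT sST; set X0 := edges_within OPT T.
pose P X := [&& X \subset X0, connectsb X (endpoints src tgt X) & connectsb X S].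
have candidate X : is_subtree src tgt OPT T X /\ connects src tgt X S -> P X.
  case=> -[inX0 cX _] cS; apply/and3P; split; try exact/connectsP.
  by apply/subsetP => e /inX0; rewrite inE andbA.
have endpoints_X0 : endpoints src tgt X0 \subset T.
  by apply/subsetP => x /setUP[] /imsetP[e]; rewrite inE => /and3P[_ sT tT] ->.
have PX0 : P X0.
  rewrite /P subxx /=; apply/andP; split; apply/connectsP => u v uS vS.
    by apply: connects_edges_within; rewrite // (subsetP endpoints_X0).
  by apply: connects_edges_within; rewrite // (subsetP sST).
have [X /minsetP[/and3P[sXX0 /connectsP cE /connectsP cS] minX] _] := minset_exists PX0.
have endpointsD1 e : endpoints src tgt (X :\ e) \subset endpoints src tgt X.
  apply/subsetP => x /setUP[] /imsetP[f /setD1P[_ fX] ->];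
  by rewrite inE imset_f ?orbT.
have stX : is_subtree src tgt OPT T X.
  split=> [e eX | | e eX]; first by move: (subsetP sXX0 _ eX); rewrite inE andbA.
    exact: cE.
  apply/negP => ce.
  suff /minX /(_ (subD1set X e)) /setP /(_ e) : P (X :\ e) by rewrite !inE eqxx eX.
  rewrite /P (subset_trans (subD1set X e) sXX0) /=; apply/andP; split; apply/connectsP.
    move=> u v uS vS; apply: connect_adj_setD1 => //.
    by apply: cE; apply: (subsetP (endpointsD1 e)).
  by move=> u v uS vS; apply: connect_adj_setD1 => //; apply: cS.
exists X; split=> // X' ltX'X /candidate PX'.
have eqX'X := minX _ PX' (proper_sub ltX'X).
by rewrite eqX'X properxx in ltX'X.
Qed.

End Graph.

Section ForestFamily.
Variables (R : realType) (V E : finType) (src tgt : E -> V).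
Variables (D : {set {set V}}) (OPT : {set E}).
Implicit Types (P Q : {set {set V}}) (U W T d : {set V}).

Local Notation comps := (comps src tgt).
Local Notation cps := (connects_pair_sep src tgt D OPT).
Local Notation mstep := (merge_step src tgt D OPT).

Definition refines P Q := forall W, W \in P -> exists2 W', W' \in Q & W \subset W'.

Lemma refines_refl P : refines P P.
Proof. by move=> W PW; exists W. Qed.

Lemma refines_trans P1 P2 P3 : refines P1 P2 -> refines P2 P3 -> refines P1 P3.
Proof.
move=> h12 h23 W /h12[W' /h23[W'' P3W'' sW'W''] sWW'].
by exists W''; last exact: subset_trans sWW' sW'W''.
Qed.

Lemma connects_pair_sep_subset U W W' : W \subset W' -> cps U W -> cps U W'.
Proof.
move=> sWW' /exists_inP[d dD /andP[sepd /exists_inP[T OT /andP[sTW dT]]]].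
apply/exists_inP; exists d; rewrite // sepd; apply/exists_inP; exists T => //.
by rewrite (subset_trans sTW sWW').
Qed.

Lemma merge_step_trivIset P U : trivIset P -> trivIset (mstep P U).
Proof.
rewrite /merge_step; case: ifP => // _ /trivIset_eqP tP; apply/trivIset_eqP.
have keep_meet W1 W2 x : W1 \in P -> ~~ cps U W1 -> x \in W1 ->
    x \in \bigcup_(W in P | cps U W) W -> False.
  move=> PW1 nc1 xW1 /bigcupP[W /andP[PW cW] xW].
  by rewrite (tP _ _ _ PW1 PW xW1 xW) cW in nc1.
move=> W1 W2 x; rewrite !inE => /orP[/andP[PW1 nc1] | /eqP->] /orP[/andP[PW2 nc2] | /eqP->] //.
- exact: tP.
- by move=> xW1 /(keep_meet _ _ _ PW1 nc1 xW1).
- by move=> + xW2 => /(keep_meet _ _ _ PW2 nc2 xW2).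
Qed.

Lemma merge_step_refines P U : refines P (mstep P U).
Proof.
rewrite /merge_step; case: ifP => _ W PW; last by exists W.
case cW: (cps U W); last by exists W; rewrite // !inE cW PW.
exists (\bigcup_(W0 in P | cps U W0) W0); first by rewrite !inE eqxx orbT.
by apply: bigcup_sup; rewrite PW.
Qed.

Lemma merge_step_join P U W1 W2 : W1 \in P -> W2 \in P -> cps U W1 -> cps U W2 ->
  exists2 W, W \in mstep P U & W1 :|: W2 \subset W.
Proof.
move=> PW1 PW2 c1 c2; rewrite /merge_step ifT; last by apply/exists_inP; exists W1.
exists (\bigcup_(W in P | cps U W) W); first by rewrite !inE eqxx orbT.
by rewrite subUset !bigcup_sup ?PW1 ?PW2.
Qed.

Lemma foldl_merge_trivIset P l : trivIset P -> trivIset (foldl mstep P l).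
Proof. by elim: l P => //= U l IHl P tP; apply/IHl/merge_step_trivIset. Qed.

Lemma foldl_merge_refines P l : refines P (foldl mstep P l).
Proof.
elim: l P => [|U l IHl] P; first exact: refines_refl.
exact: refines_trans (merge_step_refines U) (IHl _).
Qed.

Lemma foldl_merge_join P l U W1 W2 : U \in l -> W1 \in P -> W2 \in P ->
  cps U W1 -> cps U W2 -> exists2 W, W \in foldl mstep P l & W1 :|: W2 \subset W.
Proof.
case/splitPr=> l1 l2 PW1 PW2 c1 c2; rewrite foldl_cat /=.
have [W1' P1W1' sW1] := foldl_merge_refines l1 PW1.
have [W2' P1W2' sW2] := foldl_merge_refines l1 PW2.
have [W' PW' sW'] := merge_step_join P1W1' P1W2'
  (connects_pair_sep_subset sW1 c1) (connects_pair_sep_subset sW2 c2).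
have [W PW sW'W] := foldl_merge_refines l2 PW'.
by exists W; last by rewrite (subset_trans _ (subset_trans sW' sW'W)) ?setUSS.
Qed.

Lemma forest_family_trivIset (y : {set V} -> R) :
  trivIset (forest_family src tgt D OPT y).
Proof. exact/foldl_merge_trivIset/comps_trivIset. Qed.

Lemma forest_family_sep_subset (y : {set V} -> R) U d1 d2 T1 T2 W :
  0 < y U -> d1 \in D -> d2 \in D -> separates U d1 -> separates U d2 ->
  T1 \in comps OPT -> T2 \in comps OPT -> d1 \subset T1 -> d2 \subset T2 ->
  W \in forest_family src tgt D OPT y -> T1 \subset W -> T2 \subset W.
Proof.
move=> yU d1D d2D sep1 sep2 OT1 OT2 d1T1 d2T2 FW sT1W.
have cps_tree d T : d \in D -> separates U d -> T \in comps OPT -> d \subset T -> cps U T.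
  move=> dD sepd OT dT; apply/exists_inP; exists d; rewrite // sepd.
  by apply/exists_inP; exists T; rewrite ?subxx.
have U_sep : U \in enum (Usep D y).
  by rewrite mem_enum inE yU; apply/exists_inP; exists d1.
have [W' FW' sW'] := foldl_merge_join U_sep OT1 OT2
  (cps_tree _ _ d1D sep1 OT1 d1T1) (cps_tree _ _ d2D sep2 OT2 d2T2).
have [a [_ [ad1 _ _ _]]] := separates_elems sep1.
have aT1 := subsetP d1T1 _ ad1.
have -> : W = W'.
  apply: (trivIset_eq (forest_family_trivIset y) FW FW'); first exact: subsetP sT1W _ aT1.
  by apply: (subsetP sW'); rewrite inE aT1.
by apply: subset_trans sW'; apply: subsetUr.
Qed.

End ForestFamily.

Section Run.
Variables (R : realType) (V E : finType) (src tgt : E -> V).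
Variables (c : E -> R) (D : {set {set V}}) (eps : R) (r : run V E R).
Hypothesis D_pairs : forall d, d \in D -> #|d| = 2%N.
Hypothesis r_run : is_run src tgt c D eps r.
Implicit Types (S U : {set V}) (u v w : V) (s : R).

Local Notation n := (nph r).
Local Notation t := (ts r).
Local Notation F := (Fs r).
Local Notation adj := (adj src tgt).
Local Notation comp := (Defs.comp src tgt).
Local Notation comps := (comps src tgt).
Local Notation active := (active src tgt D).
Local Notation active_at := (active_at src tgt D r).
Local Notation tau := (deact_time src tgt D r).
Local Notation act_conn := (act_conn src tgt D r).

Lemma ts0 : t 0%N = 0.
Proof. by case: r_run => -[]. Qed.

Lemma ts_step k : (k < n)%N -> t k <= t k.+1.
Proof. by case: r_run => _ step _ _ /step[]; rewrite subr_ge0. Qed.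

Lemma Fs_step k : (k < n)%N -> F k \subset F k.+1.
Proof.
case: r_run => _ step _ _ /step[_ [_ [_ [_ [[-> | [e _ [_ ->]]] _]]]]] //.
exact: subsetUr.
Qed.

Lemma ys_step k U : (k < n)%N ->
  ys r k.+1 U = ys r k U + (if active (F k) (bs r k) U then t k.+1 - t k else 0).
Proof. by case: r_run => _ step _ _ /step[_ []]. Qed.

Lemma inactive_final U : ~~ active (F n) (bs r n) U.
Proof. by case: r_run. Qed.

Lemma ts_le i j : (i <= j)%N -> (j <= n)%N -> t i <= t j.
Proof.
move=> ij jn.
apply: (homo_leq_in (D := [pred k | (k <= n)%N]) (f := t) (r := fun x y => x <= y)) (ij) => //=.
- by move=> x y z; apply: le_trans.
- by move=> ? j' _ j'n k /andP[_ /ltnW kj']; apply: leq_trans kj' j'n.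
- by move=> k _; apply: ts_step.
- exact: leq_trans ij jn.
Qed.

Lemma ts_ge0 k : (k <= n)%N -> 0 <= t k.
Proof. by rewrite -ts0; apply: ts_le. Qed.

Lemma Fs_subset i j : (i <= j)%N -> (j <= n)%N -> F i \subset F j.
Proof.
move=> ij jn.
apply: (homo_leq_in (D := [pred k | (k <= n)%N]) (f := F)
                    (r := fun X Y => X \subset Y)) (ij) => //=.
- by move=> X Y Z; apply: subset_trans.
- by move=> ? j' _ j'n k /andP[_ /ltnW kj']; apply: leq_trans kj' j'n.
- by move=> k _; apply: Fs_step.
- exact: leq_trans ij jn.
Qed.

Lemma phase_at_geq s k k' : phase_at r s k' -> (k <= n)%N -> t k <= s -> (k <= k')%N.
Proof.
case=> _ _ + kn tks => -[-> // | lt_s]; rewrite leqNgt; apply/negP => k'k.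
by move: (lt_le_trans lt_s (le_trans (ts_le k'k kn) tks)); rewrite ltxx.
Qed.

Lemma phase_at_ltn s k k' : phase_at r s k' -> (k <= n)%N -> s < t k -> (k' < k)%N.
Proof.
case=> k'n tk's _ kn lt_s; rewrite ltnNge; apply/negP => kk'.
by move: (lt_le_trans lt_s (le_trans (ts_le kk' k'n) tk's)); rewrite ltxx.
Qed.

Lemma phase_at_leq s1 s2 k1 k2 :
  phase_at r s1 k1 -> phase_at r s2 k2 -> s1 <= s2 -> (k1 <= k2)%N.
Proof. by case=> k1n tk1 _ ph2 le12; apply: phase_at_geq ph2 k1n (le_trans tk1 le12). Qed.

Lemma phase_at_uniq s k1 k2 : phase_at r s k1 -> phase_at r s k2 -> k1 = k2.
Proof.
by move=> ph1 ph2; apply/eqP; rewrite eqn_leq (phase_at_leq ph1 ph2) ?(phase_at_leq ph2 ph1).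
Qed.

Lemma phase_at_exists s : 0 <= s -> exists k, phase_at r s k.
Proof.
move=> s0; have ex_k : exists k, (k <= n)%N && (t k <= s) by exists 0%N; rewrite ts0.
have le_n k : (k <= n)%N && (t k <= s) -> (k <= n)%N by case/andP.
case: (ex_maxnP ex_k le_n) => k /andP[kn tks] k_max.
exists k; split=> //; have [-> | k_ne_n] := eqVneq k n; [by left | right].
rewrite ltNge; apply/negP => tk1s.
by have := k_max k.+1; rewrite tk1s ltn_neqAle k_ne_n kn ltnn => /(_ isT).
Qed.

Lemma connect_phase_at s1 s2 k1 k2 u v :
  phase_at r s1 k1 -> phase_at r s2 k2 -> s1 <= s2 ->
  connect (adj (F k1)) u v -> connect (adj (F k2)) u v.
Proof.
move=> ph1 ph2 le12; apply: connect_adj_subset.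
by apply: Fs_subset (phase_at_leq ph1 ph2 le12) _; case: ph2.
Qed.

Definition together_at s u v : Prop :=
  exists k, phase_at r s k /\ exists2 S, S \in comps (F k) & (u \in S) && (v \in S).

Lemma together_atP s k u v :
  phase_at r s k -> together_at s u v <-> connect (adj (F k)) u v.
Proof.
move=> ph; split=> [[k' [ph' [S FS /andP[uS vS]]]] | uv].
  by rewrite (phase_at_uniq ph ph'); apply: comps_connect FS uS vS.
exists k; split=> //; exists (comp (F k) u); first exact: comp_in_comps.
by rewrite comp_refl mem_comp.
Qed.

Lemma active_in_comps F' (b' : {set V} -> R) S : active F' b' S -> S \in comps F'.
Proof. by case/orP => /andP[] // /andP[]. Qed.

Lemma unconnected_partner_active F' (b' : {set V} -> R) d a z : d \in D -> a \in d -> z \in d ->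
  ~~ connect (adj F') a z -> active F' b' (comp F' a).
Proof.
move=> dD ad zd nc; apply/orP; left; rewrite /demand_active comp_in_comps /=.
apply/exists_inP; exists a; first exact: comp_refl.
apply/existsP; exists z; rewrite nc andbT.
have az : a != z by apply: contraNneq nc => ->; rewrite connect0.
suff -> : [set z; a] = d by [].
apply/eqP; rewrite eqEcard D_pairs // cards2 eq_sym az andbT.
by apply/subsetP => x; rewrite !inE => /orP[] /eqP->.
Qed.

Definition active_until v t0 : Prop := forall s, 0 <= s -> s < t0 -> active_at s v.

Lemma active_until0 v : active_until v 0.
Proof. by move=> s s0 /(le_lt_trans s0); rewrite ltxx. Qed.

Lemma active_until_has_sup v : classical_sets.has_sup (active_until v).
Proof.
split; first by exists 0; apply: active_until0.
exists (t n) => t1 vt1; rewrite leNgt; apply/negP => lt_t1.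
have [k [ph [S aS _]]] := vt1 (t n) (ts_ge0 (leqnn n)) lt_t1.
have kn : k = n.
  by apply/eqP; rewrite eqn_leq (phase_at_geq ph (leqnn n) (lexx _)) andbT; case: ph.
by move: aS; rewrite kn (negbTE (inactive_final S)).
Qed.

Lemma deact_time_ge v t0 : active_until v t0 -> t0 <= tau v.
Proof. exact: (sup_upper_bound (active_until_has_sup v)). Qed.

Lemma active_at_deact v s : 0 <= s -> s < tau v -> active_at s v.
Proof.
move=> s0 s_tau; have : 0 < tau v - s by rewrite subr_gt0.
case/sup_adherent/(_ (active_until_has_sup v)) => t1 vt1.
by rewrite /deact_time subKr; apply: vt1.
Qed.

(* Once u and v are connected, any active component containing v contains u. *)
Lemma deact_time_connect_le s k u v : 0 <= s -> phase_at r s k -> s <= tau u ->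
  connect (adj (F k)) u v -> tau v <= tau u.
Proof.
move=> s0 ph s_tau uv; apply: ge_sup; first by exists 0; apply: active_until0.
move=> t' vt'; apply: deact_time_ge => s' s'0 s't'.
have [s's | ss'] := ltP s' s; first exact: active_at_deact (lt_le_trans s's s_tau).
have [k' [ph' [S aS vS]]] := vt' s' s'0 s't'.
exists k'; split=> //; exists S => //.
apply: mem_comps_connect (active_in_comps aS) vS _.
by rewrite connect_adj_sym; apply: connect_phase_at ph ph' ss' uv.
Qed.

Lemma act_conn_trans u v w : act_conn u v -> act_conn v w -> act_conn u w.
Proof.
case=> t1 [t10 tog1 ut1 vt1] [t2 [t20 tog2 vt2 wt2]].
have [k1 ph1] := phase_at_exists t10; have [k2 ph2] := phase_at_exists t20.
have uv1 := (together_atP _ _ ph1).1 tog1; have vw2 := (together_atP _ _ ph2).1 tog2.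
have [le12 | lt21] := leP t1 t2.
  exists t2; split=> //; last exact: le_trans vt2 (deact_time_connect_le t10 ph1 ut1 uv1).
  by apply/(together_atP _ _ ph2)/connect_trans/vw2/(connect_phase_at ph1 ph2 le12 uv1).
have wv2 : connect (adj (F k2)) w v by rewrite connect_adj_sym.
exists t1; split=> //; last exact: le_trans vt1 (deact_time_connect_le t20 ph2 wt2 wv2).
by apply/(together_atP _ _ ph1)/(connect_trans uv1)/(connect_phase_at ph2 ph1 (ltW lt21) vw2).
Qed.

Lemma active_until_unconnected d x z t1 : d \in D -> x \in d -> z \in d ->
  (forall s k, 0 <= s -> s < t1 -> phase_at r s k -> ~~ connect (adj (F k)) x z) ->
  active_until x t1.
Proof.
move=> dD xd zd nc s s0 st; have [k ph] := phase_at_exists s0.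
exists k; split=> //; exists (comp (F k) x); last exact: comp_refl.
exact: unconnected_partner_active dD xd zd (nc s k s0 st ph).
Qed.

(* Both partners stay active until the first phase in which they are connected. *)
Lemma act_conn_partners d a z : d \in D -> a \in d -> z \in d -> act_conn a z.
Proof.
move=> dD ad zd.
have : exists k, (k <= n)%N && connect (adj (F k)) a z.
  exists n; rewrite leqnn /=; apply: contraT => nc.
  by move: (inactive_final (comp (F n) a)); rewrite (unconnected_partner_active _ dD ad zd nc).
case/ex_minnP=> k0 /andP[k0n az] k0_min.
have nc s k : 0 <= s -> s < t k0 -> phase_at r s k -> ~~ connect (adj (F k)) a z.
  move=> _ st ph; apply: contraTN (phase_at_ltn ph k0n st) => az'.
  by rewrite -leqNgt k0_min // az' andbT; case: ph.
have [k ph] := phase_at_exists (ts_ge0 k0n).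
exists (t k0); split; first exact: ts_ge0.
- apply/(together_atP _ _ ph); apply: connect_adj_subset az.
  by apply: Fs_subset (phase_at_geq ph k0n (lexx _)) _; case: ph.
- exact/deact_time_ge/(active_until_unconnected dD ad zd).
- apply/deact_time_ge/(active_until_unconnected dD zd ad) => s k' s0 st ph'.
  by rewrite connect_adj_sym; apply: nc ph'.
Qed.

Lemma ys_gt0_active U k : (k <= n)%N -> 0 < ys r k U ->
  exists j, [/\ (j < k)%N, active (F j) (bs r j) U & t j < t j.+1].
Proof.
elim: k => [|k IHk] kn; first by case: r_run => -[_ [_ [_ ->]]]; rewrite ltxx.
rewrite ys_step //; have [yk_gt0 _ | yk_le0] := ltP 0 (ys r k U).
  by have [j [jk aj tj]] := IHk (ltnW kn) yk_gt0; exists j; split=> //; apply: ltnW.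
case: ifP => aU; last by rewrite addr0 => y_gt0; move: (lt_le_trans y_gt0 yk_le0); rewrite ltxx.
move=> y_gt0; exists k; split=> //; rewrite -subr_gt0.
by apply: lt_le_trans y_gt0 _; rewrite gerDr.
Qed.

(* While U is an active component, neither a nor a' has met its partner outside U. *)
Lemma act_conn_separated U d d' a z a' z' : 0 < yfin r U ->
  d \in D -> a \in d -> z \in d -> a \in U -> z \notin U ->
  d' \in D -> a' \in d' -> z' \in d' -> a' \in U -> z' \notin U -> act_conn a a'.
Proof.
move=> yU dD ad zd aU zU d'D a'd z'd a'U z'U.
have [k [kn aUk tk]] := ys_gt0_active (leqnn n) yU.
have ph : phase_at r (t k) k by split=> //; [exact: ltnW | right].
have FU := active_in_comps aUk.
have nc x x' : x \in U -> x' \notin U -> forall s k', 0 <= s -> s < t k ->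
    phase_at r s k' -> ~~ connect (adj (F k')) x x'.
  move=> xU x'U s k' _ st ph'; apply: contra x'U => xx'.
  exact/(mem_comps_connect FU xU)/(connect_phase_at ph' ph (ltW st) xx').
exists (t k); split; first exact/ts_ge0/ltnW.
- exact/(together_atP _ _ ph)/(comps_connect FU aU a'U).
- exact/deact_time_ge/(active_until_unconnected dD ad zd)/nc.
- exact/deact_time_ge/(active_until_unconnected d'D a'd z'd)/nc.
Qed.

End Run.

Section CanonicalCollection.
Variables (R : realType) (V E : finType) (src tgt : E -> V).
Variables (c : E -> R) (D : {set {set V}}) (eps : R).
Variables (OPT : {set E}) (r : run V E R) (rt : {set V} -> V).
Hypothesis D_pairs : forall d, d \in D -> #|d| = 2%N.
Hypothesis r_run : is_run src tgt c D eps r.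
Hypothesis OPT_feasible : feasible src tgt D OPT.

Local Notation comps := (comps src tgt).
Local Notation canonical := (in_canonical src tgt D r OPT rt).
Local Notation act_conn := (act_conn src tgt D r).

Lemma canonical_act_conn_set S : canonical S -> act_conn_set src tgt D r S.
Proof. by case=> W _ [T _ [memS _]]; exists (rt W) => u /memS[]. Qed.

Lemma canonical_sub_comp S : canonical S -> exists2 T, T \in comps OPT & S \subset T.
Proof.
case=> W _ [T /andP[OT _] [memS _]]; exists T => //.
by apply/subsetP => v /memS[].
Qed.

Lemma canonical_uniq S S' T : canonical S -> canonical S' ->
  T \in comps OPT -> S \subset T -> S' \subset T -> S = S'.
Proof.
case=> W FW [T1 /andP[OT1 sT1W] [memS /set0Pn[x xS]]].
case=> W' FW' [T2 /andP[OT2 sT2W'] [memS' /set0Pn[x' x'S']]] OT sST sS'T.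
have [xT1 _] := (memS x).1 xS; have [x'T2 _] := (memS' x').1 x'S'.
have tOPT := comps_trivIset src tgt OPT.
have eT1 : T1 = T := trivIset_eq tOPT OT1 OT xT1 (subsetP sST _ xS).
have eT2 : T2 = T := trivIset_eq tOPT OT2 OT x'T2 (subsetP sS'T _ x'S').
subst T1 T2.
have eW : W = W' := trivIset_eq (forest_family_trivIset _ _ _ _ _) FW FW'
  (subsetP sT1W _ xT1) (subsetP sT2W' _ xT1).
by subst W'; apply/setP => v; apply/idP/idP => [/memS/memS'|/memS'/memS].
Qed.

Lemma canonical_satisfied_sep U d d' : 0 < yfin r U -> d \in D -> d' \in D ->
  separates U d -> separates U d' -> satisfied canonical d -> satisfied canonical d'.
Proof.
move=> yU dD d'D sepd sepd' [S [W FW [T1 /andP[OT1 sT1W] [memS _]]] dS].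
have [T2 OT2 d'T2] := OPT_feasible d'D.
have dT1 : d \subset T1 by apply/subsetP => v /(subsetP dS) /memS[].
have sT2W := forest_family_sep_subset yU dD d'D sepd sepd' OT1 OT2 dT1 d'T2 FW sT1W.
have [a [z [ad aU zd zU]]] := separates_elems sepd.
have [a' [z' [a'd a'U z'd z'U]]] := separates_elems sepd'.
have rt_a : act_conn (rt W) a by have [] := (memS a).1 (subsetP dS _ ad).
have rt_d' v : v \in d' -> act_conn (rt W) v.
  move=> vd'; apply: (act_conn_trans r_run rt_a).
  have aa' := act_conn_separated D_pairs r_run yU dD ad zd aU zU d'D a'd z'd a'U z'U.
  apply: (act_conn_trans r_run aa').
  exact: (act_conn_partners D_pairs r_run d'D a'd vd').
exists [set v in T2 | `[< act_conn (rt W) v >]].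
  exists W => //; exists T2; first by rewrite OT2 sT2W.
  split=> [v | ].
    by rewrite inE; split=> [/andP[-> /asboolP] | [-> /asboolP]].
  by apply/set0Pn; exists a'; rewrite inE (subsetP d'T2 _ a'd); apply/asboolP/rt_d'.
by apply/subsetP => v vd'; rewrite inE (subsetP d'T2 _ vd'); apply/asboolP/rt_d'.
Qed.

End CanonicalCollection.

Theorem lemma6p3 (R : realType) (V E : finType) (src tgt : E -> V)
    (c : E -> R) (D : {set {set V}}) (eps : R)
    (OPT : {set E}) (r : run V E R) (rt : {set V} -> V) :
  (forall e, 0 <= c e) ->
  (forall d, d \in D -> #|d| = 2%N) ->
  0 <= eps ->
  minimal_optimal src tgt c D OPT ->
  is_run src tgt c D eps r ->
  root_choice src tgt D r OPT rt ->
  (* S consists of actively connected vertex sets *)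
  (forall S, in_canonical src tgt D r OPT rt S -> act_conn_set src tgt D r S) /\
  (* (i) for every S in S, the tree T_S connects the vertices of S *)
  (forall S T, in_canonical src tgt D r OPT rt S ->
     T \in comps src tgt OPT -> S \subset T ->
     exists X, min_subtree_connecting src tgt OPT T S X /\ connects src tgt X S) /\
  (* (ii) S is agreeable w.r.t. y *)
  agreeable src tgt D OPT (yfin r) (in_canonical src tgt D r OPT rt).
Proof.
move=> _ D_pairs _ [OPT_feasible _ _] r_run _.
split; first exact: canonical_act_conn_set.
split.
  move=> S T _ OT sST; have [X minX] := min_subtree_connecting_exists OT sST.
  by exists X; split=> //; case: minX.
split; first exact: canonical_sub_comp.
split; first exact: canonical_uniq.
move=> U d d' yU dD d'D sepd sepd'.
by split; apply: (canonical_satisfied_sep D_pairs r_run OPT_feasible yU).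
Qed.
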